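(* Let $(\mathcal{P},\cdot)$ be a finite-dimensional admissible Poisson algebra. Its nilradical $\mathcal{N}(\mathcal{P})$ (the unique maximal two-sided ideal of $(\mathcal{P},\cdot)$ consisting of nilpotent elements) coincides with the largest Lie ideal of $\mathfrak{g}_{\mathcal{P}}$ contained in the Jacobson radical $\mathcal{J}(\mathcal{A}_{\mathcal{P}})$ of the commutative associative algebra $\mathcal{A}_{\mathcal{P}}$.
   Context: $\mathbb{K}$ is a field of characteristic different from $2$ and $3$. Associator: $A(X,Y,Z)=(X\cdot Y)\cdot Z-X\cdot(Y\cdot Z)$. An admissible Poisson algebra is a $\mathbb{K}$-vector space $\mathcal{P}$ with a bilinear product $\cdot$ satisfying $3A(X,Y,Z)=(X\cdot Z)\cdot Y+(Y\cdot Z)\cdot X-(Y\cdot X)\cdot Z-(Z\cdot X)\cdot Y$ for all $X,Y,Z$. Its bracket $\{X,Y\}=\frac12(X\cdot Y-Y\cdot X)$ is a Lie bracket and its symmetrized product $X\bullet Y=\frac12(X\cdot Y+Y\cdot X)$ is commutative and associative; $\mathfrak{g}_{\mathcal{P}}=(\mathcal{P},\{\,,\,\})$, $\mathcal{A}_{\mathcal{P}}=(\mathcal{P},\bullet)$. Powers: $X^1=X$, $X^{i+1}=X\cdot X^i$; $X$ is nilpotent if $X^r=0$ for some $r$. *)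

From HB Require Import structures.
From mathcomp Require Import all_boot all_order all_algebra.
Set Implicit Arguments. Unset Strict Implicit. Unset Printing Implicit Defensive.
Import GRing.Theory.
Local Open Scope ring_scope.

Section AdmissiblePoisson.
Variables (K : fieldType) (V : vectType K) (mul : V -> V -> V).

Definition bilinear_prod : Prop :=
  (forall (a : K) (x y z : V), mul (a *: x + y) z = a *: mul x z + mul y z) /\
  (forall (a : K) (x y z : V), mul z (a *: x + y) = a *: mul z x + mul z y).

Definition assoc3 (x y z : V) : V := mul (mul x y) z - mul x (mul y z).

Definition admissible_identity : Prop :=
  forall x y z : V,
    3%:R *: assoc3 x y z =
      mul (mul x z) y + mul (mul y z) x - mul (mul y x) z - mul (mul z x) y.

Definition pbracket (x y : V) : V := (2%:R)^-1 *: (mul x y - mul y x).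
Definition psym (x y : V) : V := (2%:R)^-1 *: (mul x y + mul y x).

(* powers: mpow x n = X^(n+1), i.e. X^1 = X, X^(i+1) = X . X^i *)
Fixpoint mpow (x : V) (n : nat) : V :=
  match n with 0 => x | n'.+1 => mul x (mpow x n') end.

Definition nilpotent_elt (x : V) : Prop := exists n : nat, mpow x n = 0.

Definition two_sided_ideal (U : {vspace V}) : Prop :=
  forall x y : V, x \in U -> mul x y \in U /\ mul y x \in U.

Definition lie_ideal (U : {vspace V}) : Prop :=
  forall x y : V, x \in U -> pbracket x y \in U.

Definition sym_ideal (U : {vspace V}) : Prop :=
  forall x y : V, x \in U -> psym x y \in U.

Definition is_nilradical (N : {vspace V}) : Prop :=
  [/\ two_sided_ideal N, (forall x, x \in N -> nilpotent_elt x) &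
      forall I : {vspace V}, two_sided_ideal I ->
        (forall x, x \in I -> nilpotent_elt x) -> (I <= N)%VS].

(* quasi-regularity in the (possibly non-unital) commutative algebra (P,•) *)
Definition quasi_regular (x : V) : Prop := exists y : V, x + y + psym x y = 0.

Definition is_jacobson_radical (J : {vspace V}) : Prop :=
  [/\ sym_ideal J, (forall x, x \in J -> quasi_regular x) &
      forall I : {vspace V}, sym_ideal I ->
        (forall x, x \in I -> quasi_regular x) -> (I <= J)%VS].

Definition is_largest_lie_ideal_in (J M : {vspace V}) : Prop :=
  [/\ lie_ideal M, (M <= J)%VS &
      forall I : {vspace V}, lie_ideal I -> (I <= J)%VS -> (I <= M)%VS].

End AdmissiblePoisson.

(** The symmetrized product of an admissible Poisson algebra is associative and
    every bracket [{x, -}] is a derivation of it.  Hence powers in [(P, .)] and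
    in [(P, •)] agree, so the nil two-sided ideals of [(P, .)] are exactly the
    Lie ideals of [g_P] that are nil ideals of [A_P].  In finite dimension the
    Jacobson radical [J] of [A_P] is nil: if [x \in J], the powers of [x] are
    linearly dependent, so some [x^i] satisfies [x^i = x^i • u] with [u \in J],
    and quasi-regularity of [-u] forces [x^i = 0].  Finally the largest Lie
    ideal [N] inside [J] is also an ideal of [A_P]: by the derivation rule,
    [N + N • P] is again a Lie ideal inside [J]. *)

From HB Require Import structures.
From mathcomp Require Import all_boot all_order all_algebra ring.
From mathcomp Require Import boolp.
Set Implicit Arguments. Unset Strict Implicit. Unset Printing Implicit Defensive.
Import GRing.Theory.
Local Open Scope ring_scope.

Lemma coord_vbasis_inj (K : fieldType) (V : vectType K) (u v : V) :
  (forall i, coord (vbasis fullv) i u = coord (vbasis fullv) i v) -> u = v.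
Proof.
move=> eq_uv; rewrite (coord_vbasis (memvf u)) (coord_vbasis (memvf v)).
by apply: eq_bigr => i _; rewrite eq_uv.
Qed.

Lemma greatest_subspace (K : fieldType) (V : vectType K) (P : {vspace V} -> Prop) :
  P 0%VS -> (forall U W, P U -> P W -> P (U + W)%VS) ->
  exists2 U, P U & forall W, P W -> (W <= U)%VS.
Proof.
move=> P0 PD; pose has_dim n := `[< exists U, P U /\ \dim U = n >].
have exP : exists n, has_dim n by exists 0%N; apply/asboolP; exists 0%VS; rewrite dimv0.
have ubP n : has_dim n -> (n <= \dim (fullv : {vspace V}))%N.
  by move=> /asboolP[U [_ <-]]; exact: dimvS (subvf U).
case: (ex_maxnP exP ubP) => _ /asboolP[U [PU <-]] maxU.
exists U => // W PW; have /eqP <- : (W + U)%VS == U.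
  by rewrite eq_sym eqEdim addvSr maxU //; apply/asboolP; exists (W + U)%VS; auto.
exact: addvSl.
Qed.

Section AdmissiblePoissonAlgebra.
Variables (K : fieldType) (V : vectType K) (mul : V -> V -> V).
Hypothesis char2 : 2%:R != 0 :> K.
Hypothesis char3 : 3%:R != 0 :> K.
Hypothesis mul_bilinear : bilinear_prod mul.
Hypothesis mul_admissible : admissible_identity mul.

Local Notation s := (psym mul).
Local Notation b := (pbracket mul).

Lemma mul0l z : mul 0 z = 0.
Proof.
have := mul_bilinear.1 1 0 0 z; rewrite !scale1r addr0 => eq2.
by apply: (addrI (mul 0 z)); rewrite addr0 -eq2.
Qed.
Lemma mul0r z : mul z 0 = 0.
Proof.
have := mul_bilinear.2 1 0 0 z; rewrite !scale1r addr0 => eq2.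
by apply: (addrI (mul z 0)); rewrite addr0 -eq2.
Qed.
Lemma mulDl x y z : mul (x + y) z = mul x z + mul y z.
Proof. by have := mul_bilinear.1 1 x y z; rewrite !scale1r. Qed.
Lemma mulDr x y z : mul z (x + y) = mul z x + mul z y.
Proof. by have := mul_bilinear.2 1 x y z; rewrite !scale1r. Qed.
Lemma mulZl a x z : mul (a *: x) z = a *: mul x z.
Proof. by have := mul_bilinear.1 a x 0 z; rewrite !addr0 mul0l addr0. Qed.
Lemma mulZr a x z : mul z (a *: x) = a *: mul z x.
Proof. by have := mul_bilinear.2 a x 0 z; rewrite !addr0 mul0r addr0. Qed.
Lemma mulNl x z : mul (- x) z = - mul x z.
Proof. by rewrite -scaleN1r mulZl scaleN1r. Qed.
Lemma mulNr x z : mul z (- x) = - mul z x.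
Proof. by rewrite -scaleN1r mulZr scaleN1r. Qed.

Let mulE := (mulDl, mulDr, mulZl, mulZr, mulNl, mulNr, mul0l, mul0r).

Let coordE (i : 'I_(\dim (fullv : {vspace V}))) :
  (forall u v, coord (vbasis fullv) i (u + v) =
     coord (vbasis fullv) i u + coord (vbasis fullv) i v) *
  (forall u, coord (vbasis fullv) i (- u) = - coord (vbasis fullv) i u) *
  (forall a u, coord (vbasis fullv) i (a *: u) = a * coord (vbasis fullv) i u) *
  (coord (vbasis fullv) i 0 = 0).
Proof. by split; [split; [split|]|] => *; rewrite ?linearD ?linearN ?linearZ ?linear0. Qed.

(* Expanding [s], [b] and [mul] by bilinearity and comparing coordinates turns an
   identity between linear combinations of products into a field identity in
   the coordinates of the products. *)
Ltac expand_coords :=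
  apply: coord_vbasis_inj; let i := fresh "i" in move=> i;
  rewrite /psym /pbracket ?mulE !(coordE i); (field; rewrite ?char2 ?char3 //) || ring.

Let assoc_defect x y z := 3%:R *: assoc3 mul x y z -
  (mul (mul x z) y + mul (mul y z) x - mul (mul y x) z - mul (mul z x) y).

Let assoc_defect0 x y z : assoc_defect x y z = 0.
Proof. by rewrite /assoc_defect mul_admissible subrr. Qed.

Lemma psymA x y z : s (s x y) z = s x (s y z).
Proof.
apply: subr0_eq.
have -> : s (s x y) z - s x (s y z) = (2%:R^-1 * 2%:R^-1 * 3%:R^-1) *:
    (assoc_defect x y z + assoc_defect x z y - assoc_defect z x y - assoc_defect z y x).
  by rewrite /assoc_defect /assoc3; expand_coords.
by rewrite !assoc_defect0 !(addr0, subr0) scaler0.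
Qed.

Lemma pbracket_psymr x y z : b x (s y z) = s (b x y) z + s y (b x z).
Proof.
apply: subr0_eq.
have -> : b x (s y z) - (s (b x y) z + s y (b x z)) = (2%:R^-1 * 2%:R^-1 * 3%:R^-1) *:
    (- assoc_defect x y z - assoc_defect x z y + assoc_defect y x z
     - assoc_defect y z x + assoc_defect z x y - assoc_defect z y x).
  by rewrite /assoc_defect /assoc3; expand_coords.
by rewrite !assoc_defect0 !(addr0, subr0, oppr0) scaler0.
Qed.

Lemma psymC x y : s x y = s y x. Proof. by rewrite /psym addrC. Qed.
Lemma pbracketC x y : b x y = - b y x. Proof. expand_coords. Qed.
Lemma pbracketxx x : b x x = 0. Proof. expand_coords. Qed.
Lemma mul_pbracket_psym x y : mul x y = b x y + s x y. Proof. expand_coords. Qed.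
Lemma psymDl x y z : s (x + y) z = s x z + s y z. Proof. expand_coords. Qed.
Lemma psymDr x y z : s z (x + y) = s z x + s z y. Proof. expand_coords. Qed.
Lemma psymZl a x z : s (a *: x) z = a *: s x z. Proof. expand_coords. Qed.
Lemma psymZr a x z : s z (a *: x) = a *: s z x. Proof. expand_coords. Qed.
Lemma psymNl x z : s (- x) z = - s x z. Proof. expand_coords. Qed.
Lemma psymNr x z : s z (- x) = - s z x. Proof. expand_coords. Qed.
Lemma psym0l z : s 0 z = 0. Proof. expand_coords. Qed.
Lemma psym0r z : s z 0 = 0. Proof. expand_coords. Qed.
Lemma pbracketDl x y z : b (x + y) z = b x z + b y z. Proof. expand_coords. Qed.
Lemma pbracketZl a x z : b (a *: x) z = a *: b x z. Proof. expand_coords. Qed.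
Lemma pbracket0l z : b 0 z = 0. Proof. expand_coords. Qed.

Lemma psym_sumr a I r (P : pred I) (F : I -> V) :
  s a (\sum_(i <- r | P i) F i) = \sum_(i <- r | P i) s a (F i).
Proof. exact: (big_morph (s a) (fun u v => psymDr u v a) (psym0r a)). Qed.
Lemma psym_suml a I r (P : pred I) (F : I -> V) :
  s (\sum_(i <- r | P i) F i) a = \sum_(i <- r | P i) s (F i) a.
Proof. exact: (big_morph (s^~ a) (fun u v => psymDl u v a) (psym0l a)). Qed.
Lemma pbracket_suml a I r (P : pred I) (F : I -> V) :
  b (\sum_(i <- r | P i) F i) a = \sum_(i <- r | P i) b (F i) a.
Proof. exact: (big_morph (b^~ a) (fun u v => pbracketDl u v a) (pbracket0l a)). Qed.

(* [spow x n] is the power [x^(n+1)] in [A_P], indexed like [mpow]. *)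
Fixpoint spow (x : V) (n : nat) : V :=
  if n is n'.+1 then s x (spow x n') else x.

Lemma pbracket_spow x n : b x (spow x n) = 0.
Proof.
elim: n => [|n IHn] /=; first exact: pbracketxx.
by rewrite pbracket_psymr pbracketxx IHn psym0l psym0r addr0.
Qed.

Lemma mpow_spow x n : mpow mul x n = spow x n.
Proof. by elim: n => [|n IHn] //=; rewrite IHn mul_pbracket_psym pbracket_spow add0r. Qed.

Lemma psym_spow x m n : s (spow x m) (spow x n) = spow x (m + n).+1.
Proof. by elim: m => [|m IHm] //=; rewrite psymA IHm. Qed.

Lemma spow_mem (I : {vspace V}) x n : sym_ideal mul I -> x \in I -> spow x n \in I.
Proof. by move=> symI xI; case: n => [|n] //=; apply: symI. Qed.

Lemma nilpotent_quasi_regular x : nilpotent_elt mul x -> quasi_regular mul x.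
Proof.
move=> [n]; rewrite mpow_spow => xn0.
pose q n := \sum_(k < n) (-1) ^+ k.+1 *: spow x k.
have qE m : x + q m + s x (q m) = (-1) ^+ m *: spow x m.
  elim: m => [|m IHm]; first by rewrite /q big_ord0 psym0r !addr0 expr0 scale1r.
  rewrite /q big_ord_recr /= -/(q m) psymDr psymZr.
  have -> : x + (q m + (-1) ^+ m.+1 *: spow x m) +
      (s x (q m) + (-1) ^+ m.+1 *: s x (spow x m)) = (x + q m + s x (q m)) +
      (-1) ^+ m.+1 *: spow x m + (-1) ^+ m.+1 *: s x (spow x m) by expand_coords.
  by rewrite IHm exprS; expand_coords.
by exists (q n); rewrite qE xn0 scaler0.
Qed.

Lemma eq0_psym_fixed u w : quasi_regular mul (- u) -> s w u = w -> w = 0.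
Proof.
move=> [y qi_y] wu_w.
have : s w (- u + y + s (- u) y) = - w.
  by rewrite psymNl !psymDr !psymNr -psymA wu_w addrK.
by rewrite qi_y psym0r => /eqP; rewrite eq_sym oppr_eq0 => /eqP.
Qed.

Lemma mem_span_psym a (Y : seq V) v :
  v \in <<[seq s a y | y <- Y]>>%VS -> exists2 u, u \in <<Y>>%VS & v = s a u.
Proof.
move=> /(coord_span (X := in_tuple _)) ->; set c := coord _.
have ltY (i : 'I_(size [seq s a y | y <- Y])) : (i < size Y)%N.
  by rewrite -[size Y](size_map (s a)).
exists (\sum_i c i v *: Y`_i).
  by apply: memv_suml => i _; rewrite memvZ // memv_span // mem_nth.
by rewrite psym_sumr; apply: eq_bigr => i _; rewrite psymZr (nth_map 0).
Qed.

Lemma quasi_regular_ideal_nil (I : {vspace V}) : sym_ideal mul I ->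
  (forall x, x \in I -> quasi_regular mul x) -> forall x, x \in I -> nilpotent_elt mul x.
Proof.
move=> symI qregI x xI; pose d := \dim (fullv : {vspace V}).
pose X := in_tuple [seq spow x k | k <- iota 0 d.+1].
have : ~~ free X.
  apply/negP => /eqP freeX; have := dimvS (subvf <<X>>%VS).
  by rewrite freeX /= size_map size_iota ltnn.
rewrite freeNE => /existsP[i]; have lt_i_d : (i < d.+1)%N
  by case: i => i /=; rewrite size_map size_iota.
have -> : X`_i = spow x i by rewrite (nth_map 0%N 0) ?size_iota // nth_iota.
have -> : drop i.+1 X = [seq s (spow x i) y | y <- [seq spow x k | k <- iota 0 (d - i)%N]].
  rewrite /= -map_drop drop_iota -[(1 + i)%N]addn0 iotaDl -!map_comp.
  by apply: eq_map => k /=; rewrite psym_spow.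
case/mem_span_psym => u uY xi_fixed; exists i; rewrite mpow_spow.
apply: (eq0_psym_fixed (u := u)); last by rewrite -xi_fixed.
apply: qregI; rewrite memvN; apply: subvP uY; apply/span_subvP => _ /mapP[k _ ->].
exact: spow_mem.
Qed.

Lemma sym_idealD (I U : {vspace V}) :
  sym_ideal mul I -> sym_ideal mul U -> sym_ideal mul (I + U)%VS.
Proof.
move=> symI symU _ y /memv_addP[a aI [c cU ->]].
by rewrite psymDl memv_add ?symI ?symU.
Qed.

Lemma lie_idealD (I U : {vspace V}) :
  lie_ideal mul I -> lie_ideal mul U -> lie_ideal mul (I + U)%VS.
Proof.
move=> lieI lieU _ y /memv_addP[a aI [c cU ->]].
by rewrite pbracketDl memv_add ?lieI ?lieU.
Qed.

(* With [y] quasi-inverse to [u] and [z] to [v + y • v], the element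
   [y + z + y • z] is quasi-inverse to [u + v]. *)
Lemma quasi_regularD (I U : {vspace V}) : sym_ideal mul U ->
  (forall x, x \in I -> quasi_regular mul x) ->
  (forall x, x \in U -> quasi_regular mul x) ->
  forall x, x \in (I + U)%VS -> quasi_regular mul x.
Proof.
move=> symU qregI qregU _ /memv_addP[u uI [v vU ->]].
have [y qi_y] := qregI u uI.
have [z qi_z] : quasi_regular mul (v + s y v).
  by apply/qregU/memvD; rewrite // psymC symU.
exists (y + z + s y z).
have -> : u + v + (y + z + s y z) + s (u + v) (y + z + s y z) =
    (u + y + s u y) + (v + s y v + z + s (v + s y v) z) + s z (u + y + s u y).
  have e1 : s u (s y z) = s z (s u y) by rewrite [RHS]psymC psymA.
  have e2 : s v (s y z) = s (s y v) z by rewrite [s y v]psymC psymA.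
  rewrite !psymDl !psymDr e1 e2 [s u z]psymC [s v y]psymC [s y z]psymC; expand_coords.
by rewrite qi_y qi_z psym0r !addr0.
Qed.

Lemma two_sided_idealP (I : {vspace V}) :
  two_sided_ideal mul I <-> lie_ideal mul I /\ sym_ideal mul I.
Proof.
split=> [idealI | [lieI symI] x y xI].
  by split=> x y xI; have [xyI yxI] := idealI x y xI; rewrite memvZ // ?memvB ?memvD.
rewrite !mul_pbracket_psym [b y x]pbracketC [s y x]psymC.
by split; rewrite ?memvD ?memvN ?lieI ?symI.
Qed.

Lemma jacobson_radical_exists : exists J, is_jacobson_radical mul J.
Proof.
pose P J := sym_ideal mul J /\ forall x, x \in J -> quasi_regular mul x.
have P0 : P 0%VS.
  split=> [x y | x]; rewrite memv0 => /eqP->; first by rewrite psym0l mem0v.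
  by exists 0; rewrite psym0l !addr0.
have PD U W : P U -> P W -> P (U + W)%VS.
  by move=> [symU qregU] [symW qregW]; split; [apply: sym_idealD | apply: quasi_regularD].
have [J [symJ qregJ] maxJ] := greatest_subspace P0 PD.
by exists J; split=> // I symI qregI; apply: maxJ.
Qed.

Lemma largest_lie_ideal_in_exists J : exists N, is_largest_lie_ideal_in mul J N.
Proof.
pose P N := lie_ideal mul N /\ (N <= J)%VS.
have P0 : P 0%VS.
  by split=> [x y | ]; rewrite ?sub0v // memv0 => /eqP->; rewrite pbracket0l mem0v.
have PD U W : P U -> P W -> P (U + W)%VS.
  by move=> [lieU UJ] [lieW WJ]; split; [apply: lie_idealD | rewrite subv_add UJ].
have [N [lieN NJ] maxN] := greatest_subspace P0 PD.
by exists N; split=> // I lieI IJ; apply: maxN.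
Qed.

Definition psym_span (N : {vspace V}) : {vspace V} :=
  <<[seq s a c | a <- vbasis N, c <- vbasis (fullv : {vspace V})]>>%VS.

Lemma psym_mem_span (N : {vspace V}) x y : x \in N -> s x y \in psym_span N.
Proof.
move=> xN; rewrite (coord_vbasis xN) psym_suml; apply: memv_suml => i _.
rewrite psymZl memvZ // (coord_vbasis (memvf y)) psym_sumr; apply: memv_suml => j _.
by rewrite psymZr memvZ // memv_span // allpairs_f // mem_nth // size_tuple.
Qed.

Lemma psym_span_sub (N J : {vspace V}) :
  sym_ideal mul J -> (N <= J)%VS -> (psym_span N <= J)%VS.
Proof.
move=> symJ NJ; apply/span_subvP => _ /allpairsP[[a c] [/= aN _ ->]].
by apply/symJ/(subvP NJ)/vbasis_mem.
Qed.

Lemma lie_ideal_psym_span (N : {vspace V}) : lie_ideal mul N -> lie_ideal mul (psym_span N).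
Proof.
move=> lieN g y /(coord_span (X := in_tuple _)) ->; rewrite pbracket_suml.
apply: memv_suml => i _; rewrite pbracketZl memvZ //.
have /allpairsP[[a c] [/= /vbasis_mem aN _ ->]] : (in_tuple _)`_i \in _ :=
  mem_nth 0 (ltn_ord i).
rewrite pbracketC pbracket_psymr opprD pbracketC psymNl opprK.
by rewrite memvB ?psym_mem_span ?lieN.
Qed.

Lemma largest_lie_ideal_in_sym_ideal (J N : {vspace V}) :
  sym_ideal mul J -> is_largest_lie_ideal_in mul J N -> sym_ideal mul N.
Proof.
move=> symJ [lieN NJ maxN] x y xN.
have /subvP : (N + psym_span N <= N)%VS.
  apply: maxN; first by apply: lie_idealD; last exact: lie_ideal_psym_span.
  by rewrite subv_add NJ psym_span_sub.
by apply; apply: (subvP (addvSr N _)); exact: psym_mem_span.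
Qed.

Lemma nilradical_largest_lie_ideal_in_jacobson (J N : {vspace V}) :
  is_jacobson_radical mul J -> is_largest_lie_ideal_in mul J N -> is_nilradical mul N.
Proof.
move=> [symJ qregJ maxJ] largeN; have [lieN NJ maxN] := largeN.
split=> [|x /(subvP NJ)|I /two_sided_idealP[lieI symI] nilI].
- by apply/two_sided_idealP; split; last exact: largest_lie_ideal_in_sym_ideal largeN.
- exact: quasi_regular_ideal_nil.
apply: maxN => //; apply: maxJ => // x /nilI; exact: nilpotent_quasi_regular.
Qed.
End AdmissiblePoissonAlgebra.

Theorem mainTheorem8 (K : fieldType) (V : vectType K) (mul : V -> V -> V)
  (h2 : 2%:R != 0 :> K) (h3 : 3%:R != 0 :> K)
  (hbil : bilinear_prod mul) (hadm : admissible_identity mul) :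
  exists N J : {vspace V},
    [/\ is_nilradical mul N, is_jacobson_radical mul J &
        is_largest_lie_ideal_in mul J N].
Proof.
have [J radJ] := jacobson_radical_exists h2 h3 hbil hadm.
have [N largeN] := largest_lie_ideal_in_exists h2 hbil J.
have nilN := nilradical_largest_lie_ideal_in_jacobson h2 h3 hbil hadm radJ largeN.
by exists N, J.
Qed.
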